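(* (1) If $G$ is a finite $2$-group with a cyclic subgroup of index $4$, then $G''\leq Z(G)$. (2) If $G$ is a finite group of order $2^{\alpha}3^{\beta}$ (with $\alpha,\beta\ge 0$) having a cyclic subgroup of index less than $6$, then $G''\leq Z(G)$.
   Context: $G''=[G',G']$ is the second derived subgroup and $Z(G)$ is the center of $G$. *)

From mathcomp Require Import all_boot all_fingroup all_solvable.

(* Let N be the core of the cyclic subgroup C.  As Aut N is abelian, G' centralises N.
   In G/N the cyclic subgroup C/N is core-free of index at most 4, which forces (G/N)'
   to be cyclic or of exponent 2: either C/N = 1; or C/N is maximal, G/N is a Frobenius
   group with complement C/N, and (G/N)' lies in its kernel, of order |G/N : C/N|; or
   C/N < M < G/N with both indices 2, and then M has exponent 2.  If G'/N is cyclic then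
   G' is abelian.  If G'/N has exponent 2, then [x, y]^2 = [x^2, y] = 1 for x, y in G',
   since x^2 lies in N and N is centralised by G'; so G'' is a subgroup of the cyclic
   group N of order at most 2, normal in G, hence central. *)

From mathcomp Require Import all_boot all_fingroup all_solvable.
From mathcomp Require Import vcharacter zify.
Set Implicit Arguments.
Unset Strict Implicit.
Unset Printing Implicit Defensive.
Local Open Scope group_scope.

Section Der2Center.

Variable gT : finGroupType.
Implicit Types G H K M N Q C D W : {group gT}.

Lemma cyclic_or_exponent2S H K :
  H \subset K -> cyclic K \/ exponent K %| 2 -> cyclic H \/ exponent H %| 2.
Proof.
move=> sHK [cK | eK]; first by left; apply: cyclicS cK.
by right; apply: dvdn_trans (exponentS sHK) eK.
Qed.

Lemma cyclic_or_exponent2_card_le4 K : #|K| <= 4 -> cyclic K \/ exponent K %| 2.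
Proof.
move=> leK4.
have [pK | npK] := boolP (2.-group K); last first.
  left; apply: prime_cyclic.
  by move: npK leK4 (cardG_gt0 K); rewrite /pgroup; case: #|K| => [|[|[|[|[|]]]]].
have aK : abelian K.
  apply: (p2group_abelian pK).
  by move: leK4 (cardG_gt0 K); case: #|K| => [|[|[|[|[|]]]]].
have [x Kx ->] := exponent_witness (abelian_nil aK).
have [oxK | ltxK] := eqVneq #[x] #|K|.
  left; apply/cyclicP; exists x; apply/eqP.
  by rewrite eq_sym eqEcard cycle_subG Kx -orderE oxK leqnn.
right; move: (order_dvdG Kx) ltxK leK4 (cardG_gt0 K) (order_gt0 x).
by case: #|K| => [|[|[|[|[|]]]]]; case: #[x] => [|[|[|[|[|]]]]].
Qed.

Section MaximalAbelianComplement.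

Variables Q D : {group gT}.
Hypotheses (aD : abelian D) (maxD : maximal D Q).
Hypotheses (nnDQ : ~~ (Q \subset 'N(D))) (coreD : gcore D Q = 1).

Let sDQ : D \subset Q := proper_sub (maxgroupp maxD).

Let maximal_between {H : {group gT}} : D \subset H -> H \subset Q -> H :=: D \/ H :=: Q.
Proof.
have /maximal_eqP[_ maxH] : maximal_eq D Q by rewrite /maximal_eq maxD orbT.
exact: maxH.
Qed.

Lemma norm_maximal_compl : 'N_Q(D) = D.
Proof.
have sDN : D \subset 'N_Q(D) by rewrite subsetI sDQ normG.
have [// | eNQ] := maximal_between sDN (subsetIl Q _).
by case/negP: nnDQ; rewrite -eNQ subsetIr.
Qed.

Lemma cent1_maximal_compl a : a \in D^# -> 'C_Q[a] = D.
Proof.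
case/setD1P=> nta Da.
have sDC : D \subset 'C_Q[a] by rewrite subsetI sDQ sub_cent1 (subsetP aD).
have [// | eCQ] := maximal_between sDC (subsetIl Q _).
have nAQ : Q \subset 'N(<[a]>) by rewrite cents_norm // cent_cycle -eCQ subsetIr.
have : <[a]> \subset gcore D Q by rewrite gcore_max ?cycle_subG.
by rewrite coreD subG1 cycle_eq1 (negPf nta).
Qed.

Lemma Frobenius_maximal_compl : [Frobenius Q with complement D].
Proof.
have neDQ : D != Q by apply: contraNneq nnDQ => <-; apply: normG.
have ntD : D :!=: 1 by apply: contraNneq nnDQ => ->; rewrite norm1 subsetT.
apply/andP; split=> //; apply/normedTI_memJ_P; split=> //.
  by rewrite setD_eq0 subG1.
move=> a g D1a Qg; rewrite !inE conjg_eq1 (setD1P D1a).1 /=.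
apply/idP/idP => [Dag | Dg]; last by rewrite groupJ // (setD1P D1a).2.
have D1ag : a ^ g \in D^# by rewrite !inE conjg_eq1 (setD1P D1a).1.
have defCag : 'C_Q[a ^ g] = D :^ g.
  by rewrite cent1J -{1}(conjGid Qg) -conjIg cent1_maximal_compl.
have sDDg : D \subset D :^ g by rewrite -defCag cent1_maximal_compl.
rewrite -norm_maximal_compl inE Qg; apply/normP/esym/eqP.
by rewrite eqEcard sDDg cardJg leqnn.
Qed.

End MaximalAbelianComplement.

Section Index2.

Variables M D : {group gT}.
Hypotheses (sDM : D \subset M) (iMD : #|M : D| = 2).

Lemma expg2_mem_index2 y : y \in M -> y ^+ 2 \in D.
Proof.
move=> My; have nsDM := index2_normal sDM iMD.
have Ny : y \in 'N(D) by rewrite (subsetP (normal_norm nsDM)).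
apply: coset_idr; first by rewrite groupX.
rewrite morphX // -iMD -card_quotient ?normal_norm //.
by rewrite expg_cardG ?mem_quotient.
Qed.

Lemma exponent2_index2_core1 Q : M <| Q -> gcore D Q = 1 -> exponent M %| 2.
Proof.
case/andP=> _ nMQ coreD; apply/exponentP=> x Mx.
suff : x ^+ 2 \in gcore D Q by rewrite coreD => /set1P.
apply/bigcapP=> g Qg; rewrite mem_conjg conjXg expg2_mem_index2 //.
by rewrite memJ_norm ?groupV ?(subsetP nMQ).
Qed.

End Index2.

Lemma der1_sub_Frobenius_ker Q K D :
  [Frobenius Q = K ><| D] -> abelian D -> Q^`(1) \subset K.
Proof.
case/Frobenius_context=> defQ _ _ _ _ aD.
have [nsKQ _ _ _ _] := sdprod_context defQ.
by rewrite der1_min ?normal_norm // -(isog_abelian (sdprod_isog defQ)).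
Qed.

Lemma card_Frobenius_ker Q K D :
  [Frobenius Q = K ><| D] -> #|K| = #|Q : D|.
Proof.
case/Frobenius_context=> defQ _ _ _ /proper_sub sDQ.
apply/eqP; rewrite -(eqn_pmul2r (cardG_gt0 D)) (sdprod_card defQ).
by rewrite mulnC Lagrange.
Qed.

Lemma der1_core1_index_le4 Q D :
    D \subset Q -> cyclic D -> gcore D Q = 1 -> #|Q : D| <= 4 ->
  cyclic Q^`(1) \/ exponent Q^`(1) %| 2.
Proof.
move=> sDQ cD coreD leQD4; have aD := cyclic_abelian cD.
have [nDQ | nnDQ] := boolP (Q \subset 'N(D)).
  have D1 : D :=: 1 by apply/trivgP; rewrite -coreD gcore_max.
  apply: cyclic_or_exponent2S (der_sub 1 Q) (cyclic_or_exponent2_card_le4 _).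
  by rewrite -indexg1 -D1.
have [eDQ | [M maxM sDM]] := maximal_exists sDQ.
  by case/negP: nnDQ; rewrite -eDQ normG.
have [eMD | neMD] := eqVneq M D.
  rewrite eMD in maxM.
  have frobQ := Frobenius_maximal_compl aD maxM nnDQ coreD.
  have [K {}frobQ] := Frobenius_kernel_exists frobQ.
  apply: cyclic_or_exponent2S (der1_sub_Frobenius_ker frobQ aD) _.
  by apply: cyclic_or_exponent2_card_le4; rewrite (card_Frobenius_ker frobQ).
have sMQ := proper_sub (maxgroupp maxM).
have ltMQ : 1 < #|Q : M| by rewrite indexg_gt1 proper_subn ?(maxgroupp maxM).
have ltDM : 1 < #|M : D|.
  by rewrite indexg_gt1; apply: contra neMD => sMD; rewrite -val_eqE eqEsubset sMD.
have [iQM iMD] : #|Q : M| = 2 /\ #|M : D| = 2.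
  have := Lagrange_index sMQ sDM; lia.
have nsMQ := index2_normal sMQ iQM.
right; apply: dvdn_trans (exponentS _) (exponent2_index2_core1 sDM iMD nsMQ coreD).
rewrite der1_min ?normal_norm // cyclic_abelian ?prime_cyclic //.
by rewrite card_quotient ?normal_norm ?iQM.
Qed.

Lemma der1_cent_cyclic G N : G \subset 'N(N) -> cyclic N -> G^`(1) \subset 'C(N).
Proof.
move=> nNG cN; have nNG' := subset_trans (der_sub 1 G) nNG.
rewrite -ker_conj_aut -sub_morphim_pre // morphim_der //.
rewrite -(derG1P (Aut_cyclic_abelian cN)).
exact: dergS (Aut_conj_aut N G).
Qed.

Lemma cent_cyclic_card_le2 G W :
  cyclic W -> #|W| <= 2 -> G \subset 'N(W) -> G \subset 'C(W).
Proof.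
move=> cW leW2 nWG; rewrite -ker_conj_aut ker_trivg_morphim nWG /=.
have AutW1 : #|Aut W| <= 1.
  by rewrite card_Aut_cyclic //; move: leW2 (cardG_gt0 W); case: #|W| => [|[|[|]]].
by rewrite (subset_trans (Aut_conj_aut W G)) ?(card_le1_trivg AutW1).
Qed.

Lemma abelian_cent_cyclic_quotient H N :
  H \subset 'N(N) -> H \subset 'C(N) -> cyclic (H / N) -> abelian H.
Proof.
move=> nNH cNH cHN; apply: (@cyclic_factor_abelian _ (N :&: H)).
  by rewrite subsetI subsetIr centsC (subset_trans cNH) ?centS ?subsetIl.
by rewrite (isog_cyclic (second_isog nNH)).
Qed.

Lemma exponent2_der1_cent H N :
    abelian N -> H \subset 'N(N) -> H \subset 'C(N) -> exponent (H / N) %| 2 ->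
  H^`(1) \subset N /\ exponent H^`(1) %| 2.
Proof.
move=> aN nNH cNH eHN.
have sH'N : H^`(1) \subset N.
  by rewrite der1_min // (abelem_abelian (exponent2_abelem eHN)).
split=> //.
have sqN x : x \in H -> x ^+ 2 \in N.
  move=> Hx; have Nx := subsetP nNH x Hx.
  apply: coset_idr; first by rewrite groupX.
  by rewrite morphX //; apply: (exponentP eHN); rewrite mem_quotient.
have sHHN : commg_set H H \subset N := subset_trans (subset_gen _) sH'N.
rewrite derg1 /commutator abelian_exponent_gen ?(abelianS sHHN) //.
apply/exponentP=> _ /imset2P[x y Hx Hy ->].
have Nxy : [~ x, y] \in N by rewrite (subsetP sHHN) // imset2_f.
have xyJx : [~ x, y] ^ x = [~ x, y].
  by apply/conjg_fixP/commgP/commute_sym; apply: (centsP cNH).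
have -> : [~ x, y] ^+ 2 = [~ x ^+ 2, y] by rewrite expgS expg1 commMgJ xyJx.
apply/eqP/commgP/commute_sym.
exact: (centsP cNH) y Hy _ (sqN x Hx).
Qed.

Lemma der2_sub_center G N :
    N <| G -> cyclic N -> cyclic (G^`(1) / N) \/ exponent (G^`(1) / N) %| 2 ->
  G^`(2) \subset 'Z(G).
Proof.
case/andP=> _ nNG cN hGN; set H := G^`(1).
have nNH : H \subset 'N(N) := subset_trans (der_sub 1 G) nNG.
have cNH : H \subset 'C(N) := der1_cent_cyclic nNG cN.
case: hGN => [cHN | eHN].
  by rewrite dergSn (commG1P (abelian_cent_cyclic_quotient nNH cNH cHN)) sub1G.
have [sH'N eH'] := exponent2_der1_cent (cyclic_abelian cN) nNH cNH eHN.
have cH' := cyclicS sH'N cN.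
have leH'2 : #|H^`(1)| <= 2 by rewrite -(exponent_cyclic cH') dvdn_leq.
rewrite subsetI der_sub centsC.
exact: cent_cyclic_card_le2 cH' leH'2 (der_norm 2 G).
Qed.

Lemma gcore_quotient_gcore G C :
  C \subset G -> gcore (C / gcore C G) (G / gcore C G) = 1.
Proof.
move=> sCG; set N := gcore C G.
have nsNG : N <| G := gcore_normal sCG.
have nsNC : N <| C := normalS (gcore_sub C G) sCG nsNG.
set L := [group of gcore (C / N) (G / N)].
have sLC : L \subset C / N := gcore_sub _ _.
have nsLG : L <| G / N := gcore_normal (quotientS N sCG).
have sL'N : coset N @*^-1 L \subset N.
  apply: gcore_max; first by rewrite -(quotientGK nsNC) morphpreS.
  by rewrite normal_norm // -(quotientGK nsNG) cosetpre_normal.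
apply/trivgP; rewrite -(trivg_quotient N) -[gval L](cosetpreK L); exact: quotientS.
Qed.

End Der2Center.

Lemma der2_sub_center_index_le4 (gT : finGroupType) (G C : {group gT}) :
  C \subset G -> cyclic C -> #|G : C| <= 4 -> G^`(2) \subset 'Z(G).
Proof.
move=> sCG cC leGC4; have nsNG := gcore_normal sCG.
apply: (der2_sub_center nsNG (cyclicS (gcore_sub C G) cC)).
rewrite quotient_der ?normal_norm //.
have coreCN := gcore_quotient_gcore sCG.
apply: der1_core1_index_le4 (quotientS _ sCG) (quotient_cyclic _ cC) coreCN _.
rewrite index_quotient_eq ?(normal_norm nsNG) //.
by rewrite (subset_trans (subsetIr _ _)) ?gcore_sub.
Qed.

Theorem proposition2p6 :
  (forall (gT : finGroupType) (G : {group gT}),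
     2.-group G ->
     (exists C : {group gT}, [/\ C \subset G, cyclic C & #|G : C| = 4%N]) ->
     [~: G^`(1), G^`(1)] \subset 'Z(G)) /\
  (forall (gT : finGroupType) (G : {group gT}),
     (exists a b : nat, #|G| = (2 ^ a * 3 ^ b)%N) ->
     (exists C : {group gT}, [/\ C \subset G, cyclic C & #|G : C| < 6]) ->
     [~: G^`(1), G^`(1)] \subset 'Z(G)).
Proof.
split=> [gT G _ [C [sCG cC iGC]] | gT G [a [b oG]] [C [sCG cC ltGC6]]].
  by apply: der2_sub_center_index_le4 sCG cC _; rewrite iGC.
apply: der2_sub_center_index_le4 sCG cC _.
have : #|G : C| %| #|G| := dvdn_indexg G C.
rewrite oG; move: ltGC6; case: #|G : C| => [|[|[|[|[|[|]]]]]] // _.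
by rewrite Euclid_dvdM // !Euclid_dvdX.
Qed.
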